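(* Fix an integer $n\ge 1$, real numbers $c_1<c_2<\cdots<c_n$ and a real number $\epsilon$. On $\mathbb{R}^3$ with coordinates $(x,y,z)$ put $\rho=\sqrt{x^2+y^2}$, $r_j=\sqrt{x^2+y^2+(z-c_j)^2}$ and $$V_\epsilon=\frac{\epsilon}{2}+\frac12\sum_{j=1}^n\frac{1}{r_j},\qquad \alpha=-\frac12\sum_{j=1}^n\frac{x\,dy-y\,dx}{r_j\,(r_j-z+c_j)},$$ defined on $U=\mathbb{R}^3\setminus\{(0,0,z): z\ge c_1\}$. On $U\times S^1$, with $\varphi$ the angular coordinate on $S^1$, let $$g_\epsilon=\frac{1}{V_\epsilon}(d\varphi+\alpha)^2+V_\epsilon\,(dx^2+dy^2+dz^2),\qquad \omega_\epsilon=(d\varphi+\alpha)\wedge dz+V_\epsilon\,dx\wedge dy,$$ considered on the open subset $W$ of $U\times S^1$ where $V_\epsilon\neq 0$ and $\rho>0$. Define the complex-valued functions $$z_1=\prod_{j=1}^n\bigl(r_j-(z-c_j)\bigr)^{1/2}\,e^{-\frac{\epsilon}{2}z+\sqrt{-1}\,\varphi},\qquad z_2=x+\sqrt{-1}\,y,$$ and set $S=\sum_{j=1}^n\frac{r_j+z-c_j}{r_j}$. Then on $W$, $$g_\epsilon=\frac{1}{V_\epsilon}\frac{dz_1}{z_1}\frac{d\bar z_1}{\bar z_1}-\frac{S}{2V_\epsilon}\Bigl(\frac{dz_1}{z_1}\frac{d\bar z_2}{\bar z_2}+\frac{dz_2}{z_2}\frac{d\bar z_1}{\bar z_1}\Bigr)+\Bigl[V_\epsilon\rho^2+\frac{S^2}{4V_\epsilon}\Bigr]\frac{dz_2}{z_2}\frac{d\bar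 z_2}{\bar z_2},$$ $$\omega_\epsilon=\frac{\sqrt{-1}}{2}\Bigl(\frac{1}{V_\epsilon}\frac{dz_1}{z_1}\wedge\frac{d\bar z_1}{\bar z_1}-\frac{S}{2V_\epsilon}\Bigl(\frac{dz_1}{z_1}\wedge\frac{d\bar z_2}{\bar z_2}+\frac{dz_2}{z_2}\wedge\frac{d\bar z_1}{\bar z_1}\Bigr)+\Bigl[V_\epsilon\rho^2+\frac{S^2}{4V_\epsilon}\Bigr]\frac{dz_2}{z_2}\wedge\frac{d\bar z_2}{\bar z_2}\Bigr).$$
   Context: For $\epsilon>0$, $g_\epsilon$ is the (toric) multi-Taub-NUT metric; for $\epsilon=0$ it is the Gibbons–Hawking metric; for $\epsilon<0$ it is a Riemannian metric where $V_\epsilon>0$ and minus a Riemannian metric where $V_\epsilon<0$. The functions $z_1,z_2$ are holomorphic for the complex structure whose $(1,0)$-forms are spanned by $dx+\sqrt{-1}\,dy$ and $(d\varphi+\alpha)+\sqrt{-1}\,V_\epsilon\,dz$. In the formula for $g_\epsilon$, a product $ab$ of two (complex) $1$-forms denotes the symmetric product $\tfrac12(a\otimes b+b\otimes a)$, so that e.g. $(dx+\sqrt{-1}dy)(dx-\sqrt{-1}dy)=dx^2+dy^2$; $dx^2$ means $dx\,dx$. *)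

From Stdlib Require Import Reals.
From Coquelicot Require Import Coquelicot.
Open Scope R_scope.

(* finite sums / products over indices j = 0, ..., n-1 *)
Fixpoint rsum (n : nat) (f : nat -> R) : R :=
  match n with O => 0 | S k => rsum k f + f k end.
Fixpoint rprod (n : nat) (f : nat -> R) : R :=
  match n with O => 1 | S k => rprod k f * f k end.

Record TV := mkTV { tx : R; ty : R; tz : R; tphi : R }.

Definition dR (f : R -> R -> R -> R -> R) (x y z ph : R) (v : TV) : R :=
  Derive (fun t => f t y z ph) x * tx v + Derive (fun t => f x t z ph) y * ty v
  + Derive (fun t => f x y t ph) z * tz v + Derive (fun t => f x y z t) ph * tphi v.

Definition dC (F : R -> R -> R -> R -> C) (x y z ph : R) (v : TV) : C :=
  (dR (fun a b c d => fst (F a b c d)) x y z ph v,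
   dR (fun a b c d => snd (F a b c d)) x y z ph v).

Definition rho (x y : R) : R := sqrt (x ^ 2 + y ^ 2).
Definition rj (c : nat -> R) (j : nat) (x y z : R) : R :=
  sqrt (x ^ 2 + y ^ 2 + (z - c j) ^ 2).

Definition Veps (n : nat) (c : nat -> R) (eps x y z : R) : R :=
  eps / 2 + / 2 * rsum n (fun j => / rj c j x y z).

Definition alpha (n : nat) (c : nat -> R) (x y z : R) (v : TV) : R :=
  - / 2 * rsum n (fun j => (x * ty v - y * tx v)
                           / (rj c j x y z * (rj c j x y z - z + c j))).

Definition theta (n : nat) (c : nat -> R) (x y z : R) (v : TV) : R :=
  tphi v + alpha n c x y z v.

Definition Sfun (n : nat) (c : nat -> R) (x y z : R) : R :=
  rsum n (fun j => (rj c j x y z + z - c j) / rj c j x y z).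

Definition z1 (n : nat) (c : nat -> R) (eps : R) (x y z ph : R) : C :=
  Cmult (RtoC (rprod n (fun j => sqrt (rj c j x y z - (z - c j))) * exp (- (eps / 2) * z)))
        (cos ph, sin ph).
Definition z2 (x y z ph : R) : C := (x, y).

Definition symC (a b : TV -> C) (v w : TV) : C :=
  Cmult (RtoC (/ 2)) (Cplus (Cmult (a v) (b w)) (Cmult (a w) (b v))).
Definition wedgeC (a b : TV -> C) (v w : TV) : C :=
  Cminus (Cmult (a v) (b w)) (Cmult (a w) (b v)).

Definition g_eps (n : nat) (c : nat -> R) (eps x y z : R) (v w : TV) : R :=
  / Veps n c eps x y z * (theta n c x y z v * theta n c x y z w)
  + Veps n c eps x y z * (tx v * tx w + ty v * ty w + tz v * tz w).
Definition omega_eps (n : nat) (c : nat -> R) (eps x y z : R) (v w : TV) : R :=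
  (theta n c x y z v * tz w - theta n c x y z w * tz v)
  + Veps n c eps x y z * (tx v * ty w - tx w * ty v).

Definition RHS (prod : (TV -> C) -> (TV -> C) -> TV -> TV -> C)
  (n : nat) (c : nat -> R) (eps x y z ph : R) (v w : TV) : C :=
  let V := Veps n c eps x y z in
  let S := Sfun n c x y z in
  let A := fun u => Cdiv (dC (z1 n c eps) x y z ph u) (z1 n c eps x y z ph) in
  let B := fun u => Cdiv (dC z2 x y z ph u) (z2 x y z ph) in
  let Ab := fun u => Cconj (A u) in
  let Bb := fun u => Cconj (B u) in
  Cplus (Cminus (Cmult (RtoC (/ V)) (prod A Ab v w))
                (Cmult (RtoC (S / (2 * V))) (Cplus (prod A Bb v w) (prod B Ab v w))))
        (Cmult (RtoC (V * rho x y ^ 2 + S ^ 2 / (4 * V))) (prod B Bb v w)).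

From Stdlib Require Import Reals Lra Psatz.
From Coquelicot Require Import Coquelicot.
Open Scope R_scope.

(* Write z1 = Q e^(i phi) with Q = prod_j (r_j - (z - c_j))^(1/2) e^(-eps z/2) > 0.
   Since d_x (r_j - (z - c_j)) = x / r_j and d_z (r_j - (z - c_j)) = -(r_j - (z - c_j)) / r_j,
   dz1/z1 = dQ/Q + i dphi = T/2 (x dx + y dy) - V_eps dz + i dphi,
   where T = sum_j 1 / (r_j (r_j - (z - c_j))), while dz2/z2 = (dx + i dy)/(x + i y).
   Because (r_j + z - c_j)(r_j - (z - c_j)) = rho^2 we have S = rho^2 T, and
   alpha = -T/2 (x dy - y dx).  After these substitutions both identities are
   rational identities in x, y, T, V_eps and the components of the tangent vectors. *)

Lemma is_derive_eq (f : R -> R) (x l l' : R) : l = l' -> is_derive f x l -> is_derive f x l'.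
Proof. now intros <-. Qed.

Lemma rsum_ext n (f g : nat -> R) : (forall j, f j = g j) -> rsum n f = rsum n g.
Proof. intros H; induction n; simpl; [ring | rewrite IHn, H; ring]. Qed.

Lemma rsum_scal n k (f : nat -> R) : rsum n (fun j => k * f j) = k * rsum n f.
Proof. induction n; simpl; [ring | rewrite IHn; ring]. Qed.

Lemma is_derive_rprod (f : nat -> R -> R) (g : nat -> R) x n :
  (forall j, is_derive (f j) x (f j x * g j)) ->
  is_derive (fun t => rprod n (fun j => f j t)) x (rprod n (fun j => f j x) * rsum n g).
Proof.
  intros Hf. induction n as [|n IH]; simpl.
  - eapply is_derive_eq; [| apply is_derive_const]. now rewrite Rmult_0_r.
  - eapply is_derive_eq; [| apply (Derive.is_derive_mult _ _ _ _ _ IH (Hf n))]. ring.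
Qed.

Lemma is_derive_sqrt_log (f : R -> R) (x df : R) :
  is_derive f x df -> 0 < f x ->
  is_derive (fun t => sqrt (f t)) x (sqrt (f x) * (df / (2 * f x))).
Proof.
  intros Hf Hpos. eapply is_derive_eq; [| apply (is_derive_sqrt _ _ _ Hf Hpos)].
  assert (Hs : 0 < sqrt (f x)) by now apply sqrt_lt_R0.
  replace (2 * f x) with (2 * (sqrt (f x) * sqrt (f x))) by (rewrite sqrt_sqrt; lra).
  field. lra.
Qed.

Lemma rj_swap c j x y z : rj c j y x z = rj c j x y z.
Proof. unfold rj. f_equal. ring. Qed.

Section Distances.
Variables (c : nat -> R) (j : nat) (x y z : R).
Hypothesis Hrho : 0 < x ^ 2 + y ^ 2.

Lemma rj_sqr : rj c j x y z ^ 2 = x ^ 2 + y ^ 2 + (z - c j) ^ 2.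
Proof. unfold rj. rewrite pow2_sqrt; [reflexivity |]. pose proof (pow2_ge_0 (z - c j)). lra. Qed.

Lemma rj_pos : 0 < rj c j x y z.
Proof. unfold rj. apply sqrt_lt_R0. pose proof (pow2_ge_0 (z - c j)). lra. Qed.

Lemma rj_sub_pos : 0 < rj c j x y z - (z - c j).
Proof. pose proof rj_sqr. pose proof rj_pos. nra. Qed.

Lemma rj_add_mul_sub :
  (rj c j x y z + (z - c j)) * (rj c j x y z - (z - c j)) = x ^ 2 + y ^ 2.
Proof. pose proof rj_sqr. nra. Qed.

Lemma is_derive_rj_sub_x :
  is_derive (fun t => rj c j t y z - (z - c j)) x (x / rj c j x y z).
Proof.
  pose proof rj_pos as Hr. unfold rj in *. auto_derive.
  - pose proof (pow2_ge_0 (z - c j)). nra.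
  - replace (x * (x * 1) + y * (y * 1) + (z - c j) * ((z - c j) * 1))
      with (x ^ 2 + y ^ 2 + (z - c j) ^ 2) by ring.
    field. lra.
Qed.

Lemma is_derive_rj_sub_z :
  is_derive (fun t => rj c j x y t - (t - c j)) z ((z - c j) / rj c j x y z - 1).
Proof.
  pose proof rj_pos as Hr. unfold rj in *. auto_derive.
  - pose proof (pow2_ge_0 (z - c j)). nra.
  - replace (x * (x * 1) + y * (y * 1) + (z + - c j) * ((z + - c j) * 1))
      with (x ^ 2 + y ^ 2 + (z - c j) ^ 2) by ring.
    field. lra.
Qed.

Lemma is_derive_sqrt_rj_sub_x :
  is_derive (fun t => sqrt (rj c j t y z - (z - c j))) x
    (sqrt (rj c j x y z - (z - c j)) * (x / 2 * / (rj c j x y z * (rj c j x y z - (z - c j))))).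
Proof.
  pose proof rj_pos. pose proof rj_sub_pos.
  eapply is_derive_eq; [| exact (is_derive_sqrt_log _ _ _ is_derive_rj_sub_x rj_sub_pos)].
  cbv beta. field. lra.
Qed.

Lemma is_derive_sqrt_rj_sub_z :
  is_derive (fun t => sqrt (rj c j x y t - (t - c j))) z
    (sqrt (rj c j x y z - (z - c j)) * (- / 2 * / rj c j x y z)).
Proof.
  pose proof rj_pos. pose proof rj_sub_pos.
  eapply is_derive_eq; [| exact (is_derive_sqrt_log _ _ _ is_derive_rj_sub_z rj_sub_pos)].
  cbv beta. field. lra.
Qed.

End Distances.

Lemma is_derive_sqrt_rj_sub_y c j x y z : 0 < x ^ 2 + y ^ 2 ->
  is_derive (fun t => sqrt (rj c j x t z - (z - c j))) y
    (sqrt (rj c j x y z - (z - c j)) * (y / 2 * / (rj c j x y z * (rj c j x y z - (z - c j))))).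
Proof.
  intros Hrho. rewrite <- rj_swap.
  apply (is_derive_ext (fun t => sqrt (rj c j t x z - (z - c j)))).
  - intros t. now rewrite rj_swap.
  - apply is_derive_sqrt_rj_sub_x. lra.
Qed.

Definition Tfun n c x y z : R :=
  rsum n (fun j => / (rj c j x y z * (rj c j x y z - (z - c j)))).

Definition z1_abs n c eps x y z : R :=
  rprod n (fun j => sqrt (rj c j x y z - (z - c j))) * exp (- (eps / 2) * z).

Section Modulus.
Variables (n : nat) (c : nat -> R) (eps x y z : R).
Hypothesis Hrho : 0 < x ^ 2 + y ^ 2.

Lemma z1_abs_pos : 0 < z1_abs n c eps x y z.
Proof.
  unfold z1_abs. apply Rmult_lt_0_compat; [| apply exp_pos].
  induction n as [|k IH]; simpl; [lra |].
  apply Rmult_lt_0_compat; [exact IH | apply sqrt_lt_R0, rj_sub_pos, Hrho].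
Qed.

Lemma is_derive_z1_abs_x :
  is_derive (fun t => z1_abs n c eps t y z) x (z1_abs n c eps x y z * (x / 2 * Tfun n c x y z)).
Proof.
  unfold z1_abs, Tfun.
  apply (is_derive_ext
           (fun t => exp (- (eps / 2) * z) * rprod n (fun j => sqrt (rj c j t y z - (z - c j))))).
  { intros t. apply Rmult_comm. }
  eapply is_derive_eq;
    [| apply is_derive_scal, is_derive_rprod; intros j; now apply is_derive_sqrt_rj_sub_x].
  rewrite rsum_scal. ring.
Qed.

Lemma is_derive_z1_abs_y :
  is_derive (fun t => z1_abs n c eps x t z) y (z1_abs n c eps x y z * (y / 2 * Tfun n c x y z)).
Proof.
  unfold z1_abs, Tfun.
  apply (is_derive_ext
           (fun t => exp (- (eps / 2) * z) * rprod n (fun j => sqrt (rj c j x t z - (z - c j))))).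
  { intros t. apply Rmult_comm. }
  eapply is_derive_eq;
    [| apply is_derive_scal, is_derive_rprod; intros j; now apply is_derive_sqrt_rj_sub_y].
  rewrite rsum_scal. ring.
Qed.

Lemma is_derive_z1_abs_z :
  is_derive (fun t => z1_abs n c eps x y t) z (z1_abs n c eps x y z * - Veps n c eps x y z).
Proof.
  unfold z1_abs, Veps.
  eapply is_derive_eq; [| apply Derive.is_derive_mult].
  3: { auto_derive; [exact I | reflexivity]. }
  2: { apply is_derive_rprod. intros j. now apply is_derive_sqrt_rj_sub_z. }
  rewrite rsum_scal. ring.
Qed.

End Modulus.

Lemma dR_ext (f g : R -> R -> R -> R -> R) x y z ph u :
  (forall a b c d, f a b c d = g a b c d) -> dR f x y z ph u = dR g x y z ph u.
Proof.
  intros Hfg. unfold dR.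
  rewrite (Derive_ext _ (fun t => g t y z ph) x), (Derive_ext _ (fun t => g x t z ph) y),
    (Derive_ext _ (fun t => g x y t ph) z), (Derive_ext _ (fun t => g x y z t) ph);
    [reflexivity | intros; apply Hfg ..].
Qed.

Section Polar.
Variables (Q : R -> R -> R -> R) (qx qy qz x y z ph : R).
Hypotheses (HQx : is_derive (fun t => Q t y z) x (Q x y z * qx))
           (HQy : is_derive (fun t => Q x t z) y (Q x y z * qy))
           (HQz : is_derive (fun t => Q x y t) z (Q x y z * qz)).

Lemma dR_mul_angle (h : R -> R) (dh : R) (u : TV) : is_derive h ph dh ->
  dR (fun a b c d => h d * Q a b c) x y z ph u
  = Q x y z * (h ph * (qx * tx u + qy * ty u + qz * tz u) + dh * tphi u).
Proof.
  intros Hh. unfold dR.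
  rewrite (is_derive_unique _ _ _ (is_derive_scal _ _ (h ph) _ HQx)),
    (is_derive_unique _ _ _ (is_derive_scal _ _ (h ph) _ HQy)),
    (is_derive_unique _ _ _ (is_derive_scal _ _ (h ph) _ HQz)).
  rewrite (is_derive_unique _ ph (Q x y z * dh)).
  - ring.
  - apply (is_derive_ext (fun t => Q x y z * h t)); [intros t; apply Rmult_comm |].
    now apply is_derive_scal.
Qed.

Lemma Cdiv_dC_polar (u : TV) : 0 < Q x y z ->
  Cdiv (dC (fun a b c d => Cmult (RtoC (Q a b c)) (cos d, sin d)) x y z ph u)
       (Cmult (RtoC (Q x y z)) (cos ph, sin ph))
  = (qx * tx u + qy * ty u + qz * tz u, tphi u).
Proof.
  intros HQ. unfold dC.
  rewrite (dR_ext (fun a b c d => fst (Cmult (RtoC (Q a b c)) (cos d, sin d)))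
                   (fun a b c d => cos d * Q a b c)) by (intros; simpl; ring).
  rewrite (dR_ext (fun a b c d => snd (Cmult (RtoC (Q a b c)) (cos d, sin d)))
                   (fun a b c d => sin d * Q a b c)) by (intros; simpl; ring).
  rewrite (dR_mul_angle cos (- sin ph)), (dR_mul_angle sin (cos ph))
    by (auto_derive; [exact I | apply Rmult_1_l]).
  set (L := qx * tx u + qy * ty u + qz * tz u).
  replace (_, _) with (Cmult (Cmult (RtoC (Q x y z)) (cos ph, sin ph)) (L, tphi u)).
  - field. split.
    + intros H0. injection H0 as Hc Hs. pose proof (sin2_cos2 ph) as H1.
      unfold Rsqr in H1. rewrite Hc, Hs in H1. lra.
    + intros H0. injection H0 as H0. lra.
  - apply injective_projections; simpl; ring.
Qed.
End Polar.

Lemma dlog_z1 n c eps x y z ph u : 0 < x ^ 2 + y ^ 2 ->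
  Cdiv (dC (z1 n c eps) x y z ph u) (z1 n c eps x y z ph)
  = (x / 2 * Tfun n c x y z * tx u + y / 2 * Tfun n c x y z * ty u
     - Veps n c eps x y z * tz u, tphi u).
Proof.
  intros Hrho.
  eapply eq_trans; [exact (Cdiv_dC_polar (z1_abs n c eps) _ _ _ x y z ph
             (is_derive_z1_abs_x n c eps x y z Hrho) (is_derive_z1_abs_y n c eps x y z Hrho)
             (is_derive_z1_abs_z n c eps x y z Hrho) u (z1_abs_pos n c eps x y z Hrho)) |].
  f_equal. ring.
Qed.

Lemma dC_z2 x y z ph u : dC z2 x y z ph u = (tx u, ty u).
Proof.
  unfold dC, dR, z2. simpl.
  rewrite !Derive_const, !Derive_id.
  apply injective_projections; simpl; ring.
Qed.

Lemma Sfun_Tfun n c x y z : 0 < x ^ 2 + y ^ 2 ->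
  Sfun n c x y z = (x ^ 2 + y ^ 2) * Tfun n c x y z.
Proof.
  intros Hrho. unfold Sfun, Tfun. rewrite <- rsum_scal. apply rsum_ext. intros j.
  rewrite <- (rj_add_mul_sub c j x y z Hrho).
  pose proof (rj_pos c j x y z Hrho). pose proof (rj_sub_pos c j x y z Hrho).
  field. lra.
Qed.

Lemma alpha_Tfun n c x y z v :
  alpha n c x y z v = - / 2 * (x * ty v - y * tx v) * Tfun n c x y z.
Proof.
  unfold alpha, Tfun. rewrite Rmult_assoc, <- (rsum_scal n (x * ty v - y * tx v)). f_equal.
  apply rsum_ext. intros j.
  replace (rj c j x y z - z + c j) with (rj c j x y z - (z - c j)) by ring. reflexivity.
Qed.

Theorem mainTheorem1 :
  forall (n : nat) (c : nat -> R) (eps : R),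
    (1 <= n)%nat ->
    (forall i j : nat, (i < j < n)%nat -> c i < c j) ->
    forall x y z ph : R,
      Veps n c eps x y z <> 0 -> 0 < rho x y ->
      forall v w : TV,
        RtoC (g_eps n c eps x y z v w) = RHS symC n c eps x y z ph v w /\
        RtoC (omega_eps n c eps x y z v w)
          = Cmult (Cmult Ci (RtoC (/ 2))) (RHS wedgeC n c eps x y z ph v w).
Proof.
  intros n c eps _ _ x y z ph HV Hrho v w.
  assert (Hp : 0 < x ^ 2 + y ^ 2).
  { apply Rnot_le_lt. intros Hle. unfold rho in Hrho. rewrite sqrt_neg_0 in Hrho; lra. }
  assert (Hr : rho x y ^ 2 = x ^ 2 + y ^ 2).
  { unfold rho. apply pow2_sqrt. lra. }
  unfold RHS, symC, wedgeC. cbv beta zeta.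
  rewrite !(fun u => dlog_z1 n c eps x y z ph u Hp), !dC_z2, Hr, (Sfun_Tfun n c x y z Hp).
  unfold g_eps, omega_eps, theta. rewrite !alpha_Tfun.
  set (T := Tfun n c x y z) in *. set (V := Veps n c eps x y z) in *.
  unfold z2.
  assert (Hz2 : x * x + y * y <> 0) by nra.
  split; apply injective_projections;
    unfold Cdiv, Cmult, Cinv, Cminus, Cplus, Cconj, Copp, RtoC, Ci; simpl;
    (field; split; [exact Hz2 | exact HV]).
Qed.
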